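(* Let $G=\mathrm{GL}_2(F)$, let $N$ be the subgroup of upper triangular unipotent matrices, $A$ the subgroup of diagonal matrices and $K_A=A\cap\mathrm{GL}_2(\mathcal{O})$ the group of diagonal matrices with unit entries. Consider the action of $A\times K_A$ on $N\backslash G$ given by $(a,k)\cdot Ng = Nagk^{-1}$. Then a set of representatives for the orbits of this action is given by the cosets of the matrices $$\begin{pmatrix}1&0\\ \varpi^{\gamma}&1\end{pmatrix},\ 0\le \gamma\le\infty,\qquad \begin{pmatrix}0&1\\ 1&\varpi^{\gamma}\end{pmatrix},\ 1\le\gamma\le\infty;$$ that is, every orbit contains exactly one of these cosets.
   Context: $F$ is a non-archimedean local field of characteristic $0$ with ring of integers $\mathcal{O}$, uniformiser $\varpi$ and valuation $v$ with $v(\varpi)=1$. By convention $\varpi^{\infty}=0$. $A$ normalises $N$, so left multiplication by $A$ and right multiplication by $K_A$ give a well-defined two-sided action on $N\backslash G$. *)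

From HB Require Import structures.
From mathcomp Require Import all_boot all_order all_algebra.
Set Implicit Arguments. Unset Strict Implicit. Unset Printing Implicit Defensive.
Import Order.TTheory GRing.Theory Num.Theory.
Local Open Scope ring_scope.

(* A valuation v : F -> int is only meaningful on nonzero elements; v(0)=+oo
   is encoded by [vge]: "v x >= M" holds for x = 0 for every M. *)
Definition vge (F : fieldType) (v : F -> int) (x : F) (M : int) : Prop :=
  x = 0 \/ (M <= v x)%R.

Definition in_O (F : fieldType) (v : F -> int) (x : F) : Prop := vge v x 0.

Record nonarch_local_field (F : fieldType) (v : F -> int) (w : F) : Prop := {
  nalf_char0 : [pchar F] =i pred0;
  nalf_mul : forall x y : F, x != 0 -> y != 0 -> v (x * y) = v x + v y;
  nalf_add : forall x y : F, x != 0 -> y != 0 -> x + y != 0 ->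
               Order.min (v x) (v y) <= v (x + y);
  nalf_unif_nz : w != 0;
  nalf_unif : v w = 1;
  nalf_complete : forall u : nat -> F,
      (forall M : int, exists N : nat, forall m n : nat,
           (N <= m)%N -> (N <= n)%N -> vge v (u m - u n) M) ->
      exists l : F, forall M : int, exists N : nat, forall n : nat,
           (N <= n)%N -> vge v (u n - l) M;
  nalf_residue_finite : exists s : seq F,
      (forall y, y \in s -> in_O v y) /\
      (forall x, in_O v x -> exists2 y, y \in s & vge v (x - y) 1)
}.

Definition mx2 (F : fieldType) (a b c d : F) : 'M[F]_2 :=
  \matrix_(i < 2, j < 2)
    if (i == 0 :> nat) then (if (j == 0 :> nat) then a else b)
    else (if (j == 0 :> nat) then c else d).

(* w ^ gamma with gamma in {0,1,...} u {oo}; w ^ oo = 0 *)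
Definition wpow (F : fieldType) (w : F) (g : option nat) : F :=
  match g with Some n => w ^+ n | None => 0 end.

Definition is_Ounit (F : fieldType) (v : F -> int) (x : F) : Prop :=
  x != 0 /\ v x = 0.

Definition same_orbit (F : fieldType) (v : F -> int) (g h : 'M[F]_2) : Prop :=
  exists (x a d k1 k2 : F),
    [/\ a != 0, d != 0, is_Ounit v k1, is_Ounit v k2 &
      h = mx2 1 x 0 1 *m mx2 a 0 0 d *m g *m invmx (mx2 k1 0 0 k2)].

Definition same_Ncoset (F : fieldType) (g h : 'M[F]_2) : Prop :=
  exists x : F, h = mx2 1 x 0 1 *m g.

Definition is_rep (F : fieldType) (w : F) (r : 'M[F]_2) : Prop :=
  (exists g : option nat, r = mx2 1 0 (wpow w g) 1) \/
  (exists g : option nat,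
      (match g with Some n => (1 <= n)%N | None => true end) /\
      r = mx2 0 1 1 (wpow w g)).

From mathcomp Require Import all_boot all_order all_algebra.
From mathcomp Require Import ring zify.
Import GRing.Theory.
Set Implicit Arguments. Unset Strict Implicit. Unset Printing Implicit Defensive.
Local Open Scope ring_scope.

(* N g is determined by the bottom row (r, s) of g and by det g, and A moves
   det g freely.  So the orbit of N g only remembers (r, s) up to
   (r, s) ~ (d r / k1, d s / k2) with d <> 0 and k1, k2 units.  A complete
   invariant of this relation is which of r, s vanish together with
   v r - v s, and each value of it is attained by exactly one of the listed
   representatives, whose bottom rows are (w^c, 1) and (1, w^c). *)

Section Mx2.
Variable F : fieldType.

Lemma mx2E (M : 'M[F]_2) : M = mx2 (M 0 0) (M 0 1) (M 1 0) (M 1 1).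
Proof.
apply/matrixP => i j; rewrite !mxE.
by case: i => [[|[|i]] Hi]; case: j => [[|[|j]] Hj] //=; congr (M _ _); apply: val_inj.
Qed.

Lemma mx2_10 (a b c d : F) : mx2 a b c d 1 0 = c. Proof. by rewrite mxE. Qed.
Lemma mx2_11 (a b c d : F) : mx2 a b c d 1 1 = d. Proof. by rewrite mxE. Qed.

Lemma mx2M (a b c d a' b' c' d' : F) :
  mx2 a b c d *m mx2 a' b' c' d' =
  mx2 (a * a' + b * c') (a * b' + b * d') (c * a' + d * c') (c * b' + d * d').
Proof.
apply/matrixP => i j; rewrite !mxE !big_ord_recr big_ord0 /= !mxE /= add0r.
by case: i => [[|[|i]] Hi]; case: j => [[|[|j]] Hj].
Qed.

Lemma mx2_1 : 1%:M = mx2 1 0 0 1 :> 'M[F]_2.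
Proof.
apply/matrixP => i j; rewrite !mxE.
by case: i => [[|[|i]] Hi]; case: j => [[|[|j]] Hj].
Qed.

Lemma det_mx2 (a b c d : F) : \det (mx2 a b c d) = a * d - b * c.
Proof.
rewrite (expand_det_row _ 0) !big_ord_recr big_ord0 /= add0r /cofactor.
by rewrite !det_mx11 !mxE /= add0n expr0 expr1 mul1r mulN1r mulrN.
Qed.

Lemma unitmx_mx2 (a b c d : F) : (mx2 a b c d \in unitmx) = (a * d - b * c != 0).
Proof. by rewrite unitmxE det_mx2 unitfE. Qed.

Lemma invmx_diag2 (k1 k2 : F) : k1 != 0 -> k2 != 0 ->
  invmx (mx2 k1 0 0 k2) = mx2 k1^-1 0 0 k2^-1.
Proof.
move=> k1n k2n.
have M : mx2 k1 0 0 k2 *m mx2 k1^-1 0 0 k2^-1 = 1%:M.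
  by rewrite mx2M mx2_1 !mulr0 !mul0r !addr0 !add0r !mulfV.
by rewrite -[invmx _]mulmx1 -M mulKmx //; case: (mulmx1_unit M).
Qed.

Lemma orbit_action_mx2 (x a d k1 k2 p q r s : F) : k1 != 0 -> k2 != 0 ->
  mx2 1 x 0 1 *m mx2 a 0 0 d *m mx2 p q r s *m invmx (mx2 k1 0 0 k2) =
  mx2 ((a * p + x * d * r) / k1) ((a * q + x * d * s) / k2) (d * r / k1) (d * s / k2).
Proof. by move=> k1n k2n; rewrite invmx_diag2 // !mx2M; congr mx2; ring. Qed.

Lemma unitmx_row1_neq0 (g : 'M[F]_2) : g \in unitmx -> (g 1 0 != 0) || (g 1 1 != 0).
Proof.
rewrite [g in g \in _]mx2E unitmx_mx2; apply: contraR; rewrite negb_or !negbK.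
by case/andP => /eqP -> /eqP ->; rewrite !mulr0 subrr.
Qed.

Variable v : F -> int.

Definition row_equiv (r s r' s' : F) : Prop :=
  exists d k1 k2, [/\ d != 0, is_Ounit v k1, is_Ounit v k2,
                      r' = d * r / k1 & s' = d * s / k2].

Lemma same_orbit_row_equiv (g h : 'M[F]_2) :
  same_orbit v g h -> row_equiv (g 1 0) (g 1 1) (h 1 0) (h 1 1).
Proof.
move=> [x [a [d [k1 [k2 [_ dn k1U k2U ->]]]]]].
rewrite [g]mx2E orbit_action_mx2 ?k1U.1 ?k2U.1 // !mx2_10 !mx2_11.
by exists d, k1, k2.
Qed.

(* The diagonal entry a and the translation x solve a linear system in the
   top row whose determinant is det g; a <> 0 because det h <> 0. *)
Lemma row_equiv_same_orbit (g h : 'M[F]_2) : g \in unitmx -> h \in unitmx ->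
  row_equiv (g 1 0) (g 1 1) (h 1 0) (h 1 1) -> same_orbit v g h.
Proof.
move=> Ug Uh [d [k1 [k2 [dn k1U k2U Er Es]]]].
have [k1n _] := k1U; have [k2n _] := k2U.
move: Ug Uh Er Es; rewrite [g]mx2E [h]mx2E !unitmx_mx2 !mx2_10 !mx2_11.
move: (g 0 0) (g 0 1) (g 1 0) (g 1 1) (h 0 0) (h 0 1) (h 1 0) (h 1 1).
move=> p q r s p' q' r' s' Dg Dh Er Es; rewrite {}Er {}Es in Dh *.
pose a := (p' * k1 * s - q' * k2 * r) / (p * s - q * r).
have aE : a = k1 * k2 * (p' * (d * s / k2) - q' * (d * r / k1)) / (d * (p * s - q * r)).
  by rewrite /a; field; rewrite Dg dn k1n k2n.
exists ((p * q' * k2 - q * p' * k1) / (d * (p * s - q * r))), a, d, k1, k2.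
split=> //; first by rewrite aE !mulf_neq0 ?invr_neq0 ?mulf_neq0.
by rewrite orbit_action_mx2 //; congr mx2; rewrite /a; field; rewrite ?Dg ?dn ?k1n ?k2n.
Qed.

End Mx2.

Section Valuation.
Variables (F : fieldType) (v : F -> int).
Hypothesis vM : forall x y : F, x != 0 -> y != 0 -> v (x * y) = v x + v y.

Lemma v1 : v 1 = 0.
Proof. by apply: (addrI (v 1)); rewrite -vM ?oner_neq0 // mulr1 addr0. Qed.

Lemma vV x : x != 0 -> v x^-1 = - v x.
Proof. by move=> xn; apply: (addrI (v x)); rewrite -vM ?invr_neq0 // mulfV // v1 subrr. Qed.

Lemma is_Ounit1 : is_Ounit v 1.
Proof. by split; [exact: oner_neq0 | exact: v1]. Qed.

Definition row_invariant (r s : F) : bool * bool * int :=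
  (r == 0, s == 0, if (r != 0) && (s != 0) then v r - v s else 0).

Lemma row_invariant_equiv r s r' s' :
  row_equiv v r s r' s' -> row_invariant r s = row_invariant r' s'.
Proof.
move=> [d [k1 [k2 [dn [k1n k1v] [k2n k2v] -> ->]]]].
rewrite /row_invariant !mulf_eq0 !invr_eq0 (negbTE dn) (negbTE k1n) (negbTE k2n) /= !orbF.
have [//|rn] := eqVneq r 0; have [//|sn] := eqVneq s 0.
rewrite !vM ?invr_neq0 ?mulf_neq0 // !vV // k1v k2v.
by congr (_, _, _); ring.
Qed.

Section Uniformiser.
Variable w : F.
Hypothesis w_neq0 : w != 0.
Hypothesis v_w : v w = 1.

Lemma v_expw n : v (w ^+ n) = n%:Z.
Proof.
elim: n => [|n IH]; first by rewrite expr0 v1.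
by rewrite exprS vM ?expf_neq0 // IH v_w -addn1 PoszD addrC.
Qed.

Lemma is_Ounit_div_expw t n : t != 0 -> v t = n%:Z -> is_Ounit v (t / w ^+ n).
Proof.
move=> tn vt; have wn := expf_neq0 n w_neq0.
by split; [rewrite mulf_neq0 ?invr_neq0 | rewrite vM ?invr_neq0 // vV // v_expw vt subrr].
Qed.

Lemma exists_rep_row_equiv (r s : F) : (r != 0) || (s != 0) ->
  exists h, is_rep w h /\ row_equiv v r s (h 1 0) (h 1 1).
Proof.
have U1 := is_Ounit1.
have [-> | rn _] := eqVneq r 0; rewrite ?eqxx /=.
  move=> sn.
  exists (mx2 1 0 (wpow w None) 1); split; first by left; exists None.
  by exists s^-1, 1, 1; split; rewrite ?mx2_10 ?mx2_11 ?invr_neq0 // ?mulr0 ?mul0r ?mulVf ?divr1.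
have [->|sn] := eqVneq s 0.
  exists (mx2 0 1 1 (wpow w None)); split; first by right; exists None.
  by exists r^-1, 1, 1; split; rewrite ?mx2_10 ?mx2_11 ?invr_neq0 // ?mulr0 ?mul0r ?mulVf ?divr1.
have rsn : r / s != 0 by rewrite mulf_neq0 ?invr_neq0.
case Ev: (v (r / s)) => [n|m].
  exists (mx2 1 0 (wpow w (Some n)) 1); split; first by left; exists (Some n).
  exists s^-1, (r / s / w ^+ n), 1; split; rewrite ?mx2_10 ?mx2_11 ?invr_neq0 //=.
  - exact: is_Ounit_div_expw.
  - by field; rewrite rn sn expf_neq0.
  - by rewrite divr1 mulVf.
have srn : s / r != 0 by rewrite mulf_neq0 ?invr_neq0.
have Ev' : v (s / r) = m.+1%:Z.
  by rewrite -[s / r]invf_div vV // Ev NegzE opprK.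
exists (mx2 0 1 1 (wpow w (Some m.+1))); split; first by right; exists (Some m.+1).
exists r^-1, 1, (s / r / w ^+ m.+1); split; rewrite ?mx2_10 ?mx2_11 ?invr_neq0 //=.
- exact: is_Ounit_div_expw.
- by rewrite divr1 mulVf.
- by field; rewrite rn sn expf_neq0.
Qed.

Lemma wpow_eq0 g : (wpow w g == 0) = (g == None).
Proof. by case: g => [n|] /=; rewrite ?eqxx // (negbTE (expf_neq0 n w_neq0)). Qed.

Lemma rep_row_invariant_inj h1 h2 : is_rep w h1 -> is_rep w h2 ->
  row_invariant (h1 1 0) (h1 1 1) = row_invariant (h2 1 0) (h2 1 1) -> h1 = h2.
Proof.
case=> [[g ->]|[g [g1 ->]]]; case=> [[g' ->]|[g' [g'1 ->]]];
  rewrite /row_invariant !mx2_10 !mx2_11 !wpow_eq0 ?oner_eq0 ?andbT /= => I;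
  (try move: g1); (try move: g'1); move: I.
all: case: g => [n|]; case: g' => [n'|] //=.
all: rewrite ?v_expw ?v1 ?subr0 ?sub0r => /(congr1 snd) /= E *.
all: by [have -> : n = n' by lia | exfalso; lia].
Qed.

End Uniformiser.

End Valuation.

Lemma rep_unitmx (F : fieldType) (w : F) (h : 'M[F]_2) : is_rep w h -> h \in unitmx.
Proof.
case=> [[g ->]|[g [_ ->]]]; rewrite unitmx_mx2 ?mulr0 ?mul0r ?mul1r ?subr0 ?sub0r //.
  exact: oner_neq0.
by rewrite oppr_eq0 oner_neq0.
Qed.

Theorem proposition5p1 (F : fieldType) (v : F -> int) (w : F)
    (HF : nonarch_local_field v w) :
  (forall g : 'M[F]_2, g \in unitmx ->
     exists r : 'M[F]_2, is_rep w r /\ same_orbit v g r) /\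
  (forall r1 r2 : 'M[F]_2, is_rep w r1 -> is_rep w r2 ->
     same_orbit v r1 r2 -> same_Ncoset r1 r2).
Proof.
have vM := nalf_mul HF; have w_neq0 := nalf_unif_nz HF; have v_w := nalf_unif HF.
split.
- move=> g Ug.
  have [h [Rh Eh]] := exists_rep_row_equiv vM w_neq0 v_w (unitmx_row1_neq0 Ug).
  by exists h; split; last exact: row_equiv_same_orbit Ug (rep_unitmx Rh) Eh.
- move=> h1 h2 R1 R2 /same_orbit_row_equiv/(row_invariant_equiv vM) E.
  by rewrite (rep_row_invariant_inj vM w_neq0 v_w R1 R2 E); exists 0; rewrite -mx2_1 mul1mx.
Qed.
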